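(* Let $k\in\mathbb{R}$, let $\upsilon$ be a multiplier system of weight $k$, and suppose $V$ is a finite-dimensional subspace of the space of moderate-growth holomorphic functions on $\mathbb{H}$ which is invariant under the action $f\mapsto f|_k^\upsilon\gamma$ of $\Gamma$. If $\{f_1,\dots,f_n\}$ is a spanning set for $V$, then there is a representation $\rho:\Gamma\to GL_n(\mathbb{C})$ such that $F=(f_1,\dots,f_n)^t$ satisfies $F|_k^\upsilon\gamma=\rho(\gamma)F$ for all $\gamma\in\Gamma$, i.e. $F\in\mathcal{H}(k,\rho,\upsilon)$.
   Context: $\Gamma=SL(2,\mathbb{Z})$ acts on the upper half-plane $\mathbb{H}$ by Möbius transformations. Complex powers use the principal branch of $\log$. A multiplier system of weight $k$ is a map $\upsilon:\Gamma\to\{|w|=1\}$ such that $\nu(\gamma,z)=\upsilon(\gamma)(cz+d)^k$ ($\gamma=\begin{pmatrix}a&b\\c&d\end{pmatrix}$) satisfies $\nu(\gamma\sigma,z)=\nu(\gamma,\sigma z)\nu(\sigma,z)$. Slash: $(f|_k^\upsilon\gamma)(z)=\upsilon(\gamma)^{-1}(cz+d)^{-k}f(\gamma z)$, applied componentwise to vectors. Moderate growth: $|f(x+iy)|\le y^N$ for $y>c$, some $N,c>0$. $\mathcal{H}(k,\rho,\upsilon)$: column vectors of holomorphic moderate-growth functions $F$ with $F|_k^\upsilon\gamma=\rho(\gamma)F$ for all $\gamma$. *)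

From HB Require Import structures.
From mathcomp Require Import all_boot all_order all_algebra.
From mathcomp Require Import all_classical all_reals all_analysis.
From mathcomp Require Import complex.
Set Implicit Arguments. Unset Strict Implicit. Unset Printing Implicit Defensive.
Import Order.TTheory GRing.Theory Num.Theory.
Import numFieldNormedType.Exports.
Local Open Scope ring_scope.
Local Open Scope complex_scope.

Section Defs.
Variable R : realType.

Definition cre (z : R[i]) : R := complex.Re z.
Definition cim (z : R[i]) : R := complex.Im z.
Definition cabs (z : R[i]) : R := Num.sqrt (cre z ^+ 2 + cim z ^+ 2).

Definition upper (z : R[i]) : Prop := 0 < cim z.

(* principal argument, with values in (-pi, pi] (Arg 0 := 0, never used) *)
Definition Arg (z : R[i]) : R :=
  let x := cre z in let y := cim z in
  if 0 < x then atan (y / x)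
  else if x < 0 then (if 0 <= y then atan (y / x) + pi else atan (y / x) - pi)
  else if 0 < y then pi / 2 else if y < 0 then - (pi / 2) else 0.

(* principal-branch complex power w^k = exp(k Log w), w <> 0, k real *)
Definition cpow (w : R[i]) (k : R) : R[i] :=
  let r := powR (cabs w) k in
  (r * cos (k * Arg w)) +i* (r * sin (k * Arg w)).

(* Gamma = SL(2,Z), as integer 2x2 matrices of determinant 1 *)
Definition inSL2Z (g : 'M[int]_2) : Prop := \det g = 1.

Definition ma (g : 'M[int]_2) : R[i] := (g ord0 ord0)%:~R.
Definition mb (g : 'M[int]_2) : R[i] := (g ord0 ord_max)%:~R.
Definition mc (g : 'M[int]_2) : R[i] := (g ord_max ord0)%:~R.
Definition md (g : 'M[int]_2) : R[i] := (g ord_max ord_max)%:~R.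

Definition mob (g : 'M[int]_2) (z : R[i]) : R[i] :=
  (ma g * z + mb g) / (mc g * z + md g).

Definition is_multiplier_system (k : R) (ups : 'M[int]_2 -> R[i]) : Prop :=
  (forall g, inSL2Z g -> cabs (ups g) = 1) /\
  (forall g s z, inSL2Z g -> inSL2Z s -> upper z ->
     ups (g *m s) * cpow (mc (g *m s) * z + md (g *m s)) k =
     (ups g * cpow (mc g * mob s z + md g) k) *
     (ups s * cpow (mc s * z + md s) k)).

Definition slash (k : R) (ups : 'M[int]_2 -> R[i]) (f : R[i] -> R[i])
  (g : 'M[int]_2) : R[i] -> R[i] :=
  fun z => (ups g)^-1 * (cpow (mc g * z + md g) k)^-1 * f (mob g z).

(* holomorphic on the upper half-plane (complex differentiability) *)
Definition holo_on_H (f : R[i] -> R[i]) : Prop :=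
  forall z : R[i], upper z -> derivable (f : R[i]^o -> R[i]^o) z 1.

Definition moderate_growth (f : R[i] -> R[i]) : Prop :=
  exists N c : R, 0 < N /\ 0 < c /\
    forall x y : R, c < y -> cabs (f (x +i* y)) <= powR y N.

Definition eqH (f g : R[i] -> R[i]) : Prop := forall z, upper z -> f z = g z.

Definition is_subspace (V : set (R[i] -> R[i])) : Prop :=
  V (fun _ => 0) /\
  (forall f g, V f -> V g -> V (fun z => f z + g z)) /\
  (forall (a : R[i]) f, V f -> V (fun z => a * f z)).

Definition spans (n : nat) (f : 'I_n -> R[i] -> R[i]) (V : set (R[i] -> R[i])) :
  Prop :=
  (forall i, V (f i)) /\
  (forall g, V g -> exists c : 'I_n -> R[i],
     eqH g (fun z => \sum_(i < n) c i * f i z)).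

Definition is_rep (n : nat) (rho : 'M[int]_2 -> 'M[R[i]]_n) : Prop :=
  (forall g, inSL2Z g -> rho g \in unitmx) /\
  (forall g s, inSL2Z g -> inSL2Z s -> rho (g *m s) = rho g *m rho s).

Definition in_H_space (n : nat) (k : R) (rho : 'M[int]_2 -> 'M[R[i]]_n)
  (ups : 'M[int]_2 -> R[i]) (F : 'I_n -> R[i] -> R[i]) : Prop :=
  (forall i, holo_on_H (F i) /\ moderate_growth (F i)) /\
  (forall g, inSL2Z g -> forall i,
     eqH (slash k ups (F i) g) (fun z => \sum_(j < n) rho g i j * F j z)).

End Defs.

(* Since V is slash-invariant, each f_i|g is a combination of the f_j with a
   coefficient matrix A(g).  When the f_j are linearly dependent, g |-> A(g) is
   only multiplicative modulo the kernel K of c |-> sum_j c_j f_j.  For an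
   idempotent P with kernel K, the matrix rho(g) := P A(g) P + (1 - P) acts on
   the image of P (isomorphic to V) as the slash action, and as the identity on
   K; the cocycle relation of the multiplier system makes it multiplicative,
   and rho(g) rho(adj g) = rho(1) = 1 makes it invertible. *)
From HB Require Import structures.
From mathcomp Require Import all_boot all_order all_algebra.
From mathcomp Require Import all_classical all_reals all_analysis.
From mathcomp Require Import complex.
From mathcomp Require Import ring zify.
Import Order.TTheory GRing.Theory Num.Theory.
Import numFieldNormedType.Exports.
Local Open Scope ring_scope.
Set Implicit Arguments. Unset Strict Implicit.

Lemma det_mx2 (R : comPzRingType) (g : 'M[R]_2) :
  \det g = g ord0 ord0 * g ord_max ord_max - g ord0 ord_max * g ord_max ord0.
Proof.
rewrite (expand_det_row _ ord0) !big_ord_recl big_ord0 /cofactor !det_mx11 !mxE /=.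
rewrite expr0 mul1r addr0 expr1 mulN1r mulrN.
by congr (_ * g _ _ - _ * g _ _); [ | | congr (g _ _) | |]; apply/eqP.
Qed.

Lemma mulmx2E (R : pzSemiRingType) (g s : 'M[R]_2) i j :
  (g *m s) i j = g i ord0 * s ord0 j + g i ord_max * s ord_max j.
Proof.
rewrite mxE !big_ord_recl big_ord0 addr0.
by rewrite (_ : lift ord0 ord0 = ord_max :> 'I_2) //; apply: val_inj.
Qed.

Lemma inSL2Z1 : inSL2Z 1%:M.
Proof. by rewrite /inSL2Z det1. Qed.

Lemma inSL2ZM g s : inSL2Z g -> inSL2Z s -> inSL2Z (g *m s).
Proof. by rewrite /inSL2Z det_mulmx => -> ->; rewrite mulr1. Qed.

Lemma inSL2Z_adj g : inSL2Z g -> inSL2Z (\adj g) /\ g *m \adj g = 1%:M.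
Proof.
move=> hg; have hadj : g *m \adj g = 1%:M by rewrite mul_mx_adj hg.
split=> //; have := congr1 determinant hadj.
by rewrite det_mulmx det1 hg mul1r.
Qed.

Section Moebius.
Variable R : realType.
Local Open Scope complex_scope.

Lemma intr_complex (m : int) : (m%:~R : R[i]) = (m%:~R : R)%:C.
Proof. by rewrite rmorph_int. Qed.

Lemma jfactor_neq0 g (z : R[i]) : inSL2Z g -> upper z -> mc R g * z + md R g != 0.
Proof.
rewrite /inSL2Z det_mx2 /upper /cim /mc /md; case: z => x y hdet /= hy.
rewrite !intr_complex; apply/eqP => /eqP; rewrite eq_complex /= => /andP[/eqP hre /eqP him].
move: him; rewrite mul0r !addr0 => /eqP.
rewrite mulf_eq0 (gt_eqF hy) orbF intr_eq0 => /eqP hc.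
move: hre; rewrite hc !mul0r subrr add0r => /eqP; rewrite intr_eq0 => /eqP hd.
by move: hdet; rewrite hc hd !mulr0 subrr.
Qed.

Lemma sqr_add_gt0 (x y : R) : x +i* y != 0 -> 0 < x ^+ 2 + y ^+ 2.
Proof.
move=> hxy; rewrite lt_neqAle addr_ge0 ?sqr_ge0 // andbT eq_sym.
rewrite paddr_eq0 ?sqr_ge0 // !sqrf_eq0.
by apply: contra hxy => /andP[/eqP -> /eqP ->].
Qed.

Lemma mob_upper g (z : R[i]) : inSL2Z g -> upper z -> upper (mob g z).
Proof.
move=> hg hz; have := jfactor_neq0 hg hz.
move: hg hz; rewrite /inSL2Z det_mx2 /upper /cim /mob /ma /mb /mc /md.
case: z => x y hdet /= hy; rewrite !intr_complex /=; simpc => /sqr_add_gt0.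
have := congr1 (fun m : int => m%:~R : R) hdet; rewrite /= intrB !intrM.
set a := (g ord0 ord0)%:~R; set b := (g ord0 ord_max)%:~R.
set c := (g ord_max ord0)%:~R; set d := (g ord_max ord_max)%:~R.
move=> hdet' hnorm; rewrite !mulrA -mulNr -mulrDl divr_gt0 //.
have -> : - ((a * x + b) * c * y) + a * y * (c * x + d) = y * (a * d - b * c) by ring.
by rewrite hdet' mulr1.
Qed.

Lemma mobM g s (z : R[i]) : inSL2Z s -> upper z -> mob (g *m s) z = mob g (mob s z).
Proof.
move=> hs hz; have := jfactor_neq0 hs hz.
rewrite /mob /ma /mb /mc /md !mulmx2E !intrD !intrM.
set a := ((s ord0 ord0)%:~R : R[i]); set b := ((s ord0 ord_max)%:~R : R[i]).
set c := ((s ord_max ord0)%:~R : R[i]); set d := ((s ord_max ord_max)%:~R : R[i]).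
set A := ((g ord0 ord0)%:~R : R[i]); set B := ((g ord0 ord_max)%:~R : R[i]).
set C := ((g ord_max ord0)%:~R : R[i]); set D := ((g ord_max ord_max)%:~R : R[i]).
move=> hden.
have -> : A * ((a * z + b) / (c * z + d)) + B
          = (A * (a * z + b) + B * (c * z + d)) / (c * z + d) by field.
have -> : C * ((a * z + b) / (c * z + d)) + D
          = (C * (a * z + b) + D * (c * z + d)) / (c * z + d) by field.
by rewrite invf_div mulrA divfK //; congr (_ / _); ring.
Qed.

End Moebius.

Lemma cpow1 (R : realType) (k : R) : cpow 1 k = 1.
Proof.
rewrite /cpow /cabs /Arg /cre /cim /= ltr01 mul0r atan0 mulr0 cos0 sin0.
by rewrite expr0n /= addr0 expr1n sqrtr1 powR1 !mulr1 mulr0.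
Qed.

Lemma jfactor1 (R : realType) (z : R[i]) : mc R 1%:M * z + md R 1%:M = 1.
Proof. by rewrite /mc /md !mxE /= mul0r add0r. Qed.

Lemma mob1 (R : realType) (z : R[i]) : mob 1%:M z = z.
Proof. by rewrite /mob /ma /mb jfactor1 !mxE /= mul1r addr0 divr1. Qed.

Section Slash.
Variables (R : realType) (k : R) (ups : 'M[int]_2 -> R[i]).
Hypothesis ups_mult : is_multiplier_system k ups.

Lemma multiplier1 : ups 1%:M = 1.
Proof.
case: ups_mult => ups_abs ups_cocycle.
have hi : upper ('i : R[i]) by rewrite /upper /cim /= ltr01.
have := ups_cocycle _ _ 'i inSL2Z1 inSL2Z1 hi.
rewrite mul1mx !jfactor1 cpow1 !mulr1 => hsq.
have hnz : ups 1%:M != 0.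
  apply/eqP => h0; move: (ups_abs _ inSL2Z1).
  by rewrite h0 /cabs /cre /cim /= expr0n /= addr0 sqrtr0 => /eqP; rewrite eq_sym oner_eq0.
by apply: (mulIf hnz); rewrite mul1r -hsq.
Qed.

Lemma slash1 f z : slash k ups f 1%:M z = f z.
Proof. by rewrite /slash multiplier1 jfactor1 mob1 cpow1 !invr1 !mul1r. Qed.

Lemma slashM f g s z : inSL2Z g -> inSL2Z s -> upper z ->
  slash k ups (slash k ups f g) s z = slash k ups f (g *m s) z.
Proof.
case: ups_mult => _ ups_cocycle hg hs hz; rewrite /slash (mobM g hs hz).
have := ups_cocycle g s z hg hs hz; set w := mob g (mob s z) => hco.
by rewrite -[w in _ = w * _]invfM hco !invfM; ring.
Qed.

Lemma slash_eqH f h g : inSL2Z g -> eqH f h -> eqH (slash k ups f g) (slash k ups h g).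
Proof. by move=> hg efh z hz; rewrite /slash efh //; apply: mob_upper. Qed.

Lemma slash_sum n (a : 'I_n -> R[i]) (h : 'I_n -> R[i] -> R[i]) g z :
  slash k ups (fun w => \sum_i a i * h i w) g z = \sum_i a i * slash k ups (h i) g z.
Proof. by rewrite /slash mulr_sumr; apply: eq_bigr => i _; ring. Qed.

End Slash.

Section RowSpace.
Variables (F : fieldType) (n : nat) (S : 'rV[F]_n -> Prop).
Hypotheses (S0 : S 0) (SD : forall u v, S u -> S v -> S (u + v))
  (SZ : forall (a : F) u, S u -> S (a *: u)).

Lemma rowspace_of_subspace_from d (A : 'M[F]_n) :
  (forall x : 'rV_n, (x <= A)%MS -> S x) -> (n - \rank A <= d)%N ->
  exists K : 'M[F]_n, forall x : 'rV_n, (x <= K)%MS <-> S x.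
Proof.
elim: d A => [|d IH] A sAS hd.
  exists A => x; split; first exact: sAS.
  move=> _; apply: submx_full; rewrite /row_full eqn_leq rank_leq_col /=.
  by rewrite -subn_eq0 -leqn0.
have [sSA|] := pselect (forall x : 'rV_n, S x -> (x <= A)%MS).
  by exists A => x; split; [exact: sAS | exact: sSA].
move=> /existsNP [x /not_implyP [Sx nxA]].
apply: (IH (A + x)%MS).
  move=> y /sub_addsmxP [u ->]; apply: SD; first by apply: sAS; apply: submxMl.
  by rewrite [u.2]mx11_scalar mul_scalar_mx; apply: SZ.
have: (A < A + x)%MS by rewrite ltmxE addsmxSl /= addsmx_sub submx_refl /=; apply/negP.
rewrite ltmxErank => /andP[_ hr]; have := rank_leq_col (A + x)%MS.
by move: hd hr; lia.
Qed.

Lemma rowspace_of_subspace : exists K : 'M[F]_n, forall x : 'rV_n, (x <= K)%MS <-> S x.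
Proof.
apply: (rowspace_of_subspace_from (d := n) (A := 0)); last exact: leq_subr.
by move=> x; rewrite submx0 => /eqP ->.
Qed.

End RowSpace.

Section IdempotentConjugation.
Variables (F : fieldType) (n : nat) (P : 'M[F]_n).
Hypothesis P_idem : P *m P = P.

Definition idem_conj (A : 'M[F]_n) : 'M[F]_n := P *m A *m P + (1%:M - P).

Lemma idem_conjM A B : idem_conj A *m idem_conj B = idem_conj (A *m P *m B).
Proof.
rewrite /idem_conj; set Q := 1%:M - P.
have PQ : P *m Q = 0 by rewrite mulmxBr mulmx1 P_idem subrr.
have QP : Q *m P = 0 by rewrite mulmxBl mul1mx P_idem subrr.
have QQ : Q *m Q = Q by rewrite mulmxBr mulmx1 QP subr0.
clearbody Q; rewrite mulmxDl !mulmxDr QQ -!mulmxA PQ !mulmxA QP.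
by rewrite !mul0mx !mulmx0 addr0 add0r -[P *m A *m P *m P]mulmxA P_idem.
Qed.

Lemma idem_conj_id A : P *m A *m P = P -> idem_conj A = 1%:M.
Proof. by move=> hA; rewrite /idem_conj hA addrC subrK. Qed.

End IdempotentConjugation.

Lemma exists_proj_along (F : fieldType) n (K : 'M[F]_n) : exists P : 'M[F]_n,
  [/\ P *m P = P, (forall x : 'rV_n, (x - x *m P <= K)%MS)
     & (forall w : 'rV_n, (w <= K)%MS -> w *m P = 0)].
Proof.
have dxK : (K^C :&: K = 0)%MS by rewrite capmxC capmx_compl.
exists (proj_mx (K^C)%MS K); split=> [|x|w]; first exact: proj_mx_proj.
  by apply: proj_mx_compl_sub; apply: submx_full; rewrite addsmxC addsmx_compl_full.
exact: proj_mx_0.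
Qed.

Lemma is_rep_of_morphism (R : realType) n (rho : 'M[int]_2 -> 'M[R[i]]_n) :
  rho 1%:M = 1%:M ->
  (forall g s, inSL2Z g -> inSL2Z s -> rho (g *m s) = rho g *m rho s) -> is_rep rho.
Proof.
move=> rho1 rhoM; split=> // g hg; have [hadj gadj] := inSL2Z_adj hg.
have := rhoM _ _ hg hadj; rewrite gadj rho1 => e.
by have [] := mulmx1_unit (esym e).
Qed.

Section Combination.
Variables (R : realType) (n : nat) (f : 'I_n -> R[i] -> R[i]).

Definition comb (c : 'rV[R[i]]_n) : R[i] -> R[i] := fun z => \sum_j c 0 j * f j z.

Lemma comb0 z : comb 0 z = 0.
Proof. by rewrite /comb big1 // => j _; rewrite mxE mul0r. Qed.

Lemma combD u v z : comb (u + v) z = comb u z + comb v z.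
Proof. by rewrite /comb -big_split; apply: eq_bigr => j _; rewrite mxE mulrDl. Qed.

Lemma combB u v z : comb (u - v) z = comb u z - comb v z.
Proof. by rewrite /comb -sumrB; apply: eq_bigr => j _; rewrite !mxE mulrBl. Qed.

Lemma combZ a u z : comb (a *: u) z = a * comb u z.
Proof. by rewrite /comb mulr_sumr; apply: eq_bigr => j _; rewrite mxE mulrA. Qed.

Lemma comb_mulmx (x : 'rV_n) (M : 'M[R[i]]_n) z :
  comb (x *m M) z = \sum_(l < n) x 0 l * comb (row l M) z.
Proof.
rewrite /comb; under eq_bigr do rewrite mxE mulr_suml.
rewrite exchange_big /=; apply: eq_bigr => l _; rewrite mulr_sumr.
by apply: eq_bigr => j _; rewrite mxE mulrA.
Qed.

Lemma comb_row (M : 'M[R[i]]_n) i z : comb (row i M) z = \sum_j M i j * f j z.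
Proof. by apply: eq_bigr => j _; rewrite mxE. Qed.

Lemma comb_delta i z : comb (delta_mx 0 i) z = f i z.
Proof.
rewrite /comb (bigD1 i) //= big1 ?addr0; first by rewrite mxE !eqxx mul1r.
by move=> j hj; rewrite mxE eqxx /= (negbTE hj) mul0r.
Qed.

Lemma comb_kernel : exists K : 'M[R[i]]_n,
  forall c : 'rV_n, (c <= K)%MS <-> eqH (comb c) (fun=> 0).
Proof.
apply: rowspace_of_subspace => [z _ | u v hu hv z hz | a u hu z hz].
- exact: comb0.
- by rewrite combD hu // hv // addr0.
- by rewrite combZ hu // mulr0.
Qed.

End Combination.

Section SlashRepresentation.
Variables (R : realType) (k : R) (ups : 'M[int]_2 -> R[i]).
Hypothesis ups_mult : is_multiplier_system k ups.
Variables (n : nat) (f : 'I_n -> R[i] -> R[i]) (K : 'M[R[i]]_n).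
Variable A : 'M[int]_2 -> 'M[R[i]]_n.
Hypothesis comb_kerP : forall c : 'rV_n, (c <= K)%MS <-> eqH (comb f c) (fun=> 0).
Hypothesis slash_rowA : forall g, inSL2Z g ->
  forall i, eqH (slash k ups (f i) g) (comb f (row i (A g))).

Variable P : 'M[R[i]]_n.
Hypotheses (P_idem : P *m P = P) (P_compl : forall x : 'rV_n, (x - x *m P <= K)%MS)
  (P_ker : forall w : 'rV_n, (w <= K)%MS -> w *m P = 0).

Lemma comb_proj (x : 'rV_n) : eqH (comb f (x *m P)) (comb f x).
Proof.
move=> z hz; have /comb_kerP /(_ z hz) := P_compl x.
by rewrite combB => /eqP; rewrite subr_eq0 => /eqP.
Qed.

Lemma comb_proj_inj (x y : 'rV_n) :
  eqH (comb f (x *m P)) (comb f (y *m P)) -> x *m P = y *m P.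
Proof.
move=> exy; have /P_ker : (x *m P - y *m P <= K)%MS.
  by apply/comb_kerP => z hz; rewrite combB exy // subrr.
by rewrite mulmxBl -!mulmxA P_idem => /eqP; rewrite subr_eq0 => /eqP.
Qed.

Lemma proj_sandwich_eq (B C : 'M[R[i]]_n) :
  (forall x : 'rV_n, eqH (comb f (x *m P *m B)) (comb f (x *m P *m C))) ->
  P *m B *m P = P *m C *m P.
Proof.
move=> eBC; apply/row_matrixP => i; rewrite !rowE !mulmxA.
by apply: comb_proj_inj => z hz; rewrite !comb_proj // eBC.
Qed.

Lemma comb_mulmx_slash g (x : 'rV_n) : inSL2Z g ->
  eqH (comb f (x *m A g)) (slash k ups (comb f x) g).
Proof.
move=> hg z hz; rewrite comb_mulmx [RHS]slash_sum.
by apply: eq_bigr => l _; rewrite slash_rowA.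
Qed.

Definition slash_rep g := idem_conj P (A g).

Lemma comb_slash_rep g (x : 'rV_n) : inSL2Z g ->
  eqH (comb f (x *m slash_rep g)) (slash k ups (comb f x) g).
Proof.
move=> hg z hz; rewrite /slash_rep /idem_conj mulmxDr mulmxBr mulmx1 !mulmxA.
rewrite combD combB !comb_proj // subrr addr0 comb_mulmx_slash //.
by apply: slash_eqH => //; exact: comb_proj.
Qed.

Lemma slash_repM g s : inSL2Z g -> inSL2Z s ->
  slash_rep (g *m s) = slash_rep g *m slash_rep s.
Proof.
move=> hg hs; rewrite /slash_rep idem_conjM //; congr (_ + _).
apply: proj_sandwich_eq => x z hz.
rewrite (comb_mulmx_slash _ (inSL2ZM hg hs)) // -(slashM ups_mult _ hg hs hz).
rewrite !mulmxA comb_mulmx_slash //; apply: (slash_eqH k ups hs _ hz) => w hw.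
by rewrite comb_proj // comb_mulmx_slash.
Qed.

Lemma slash_rep1 : slash_rep 1%:M = 1%:M.
Proof.
apply: idem_conj_id; rewrite -[RHS]P_idem -{3}(mulmx1 P).
apply: proj_sandwich_eq => x z hz.
by rewrite (comb_mulmx_slash _ inSL2Z1) // (slash1 ups_mult) mulmx1.
Qed.

Lemma slash_rep_is_rep : is_rep slash_rep.
Proof. by apply: is_rep_of_morphism; [exact: slash_rep1 | exact: slash_repM]. Qed.

Lemma slash_rep_in_H : (forall i, holo_on_H (f i) /\ moderate_growth (f i)) ->
  in_H_space k slash_rep ups f.
Proof.
move=> f_holo_mod; split=> // g hg i z hz.
rewrite -comb_row rowE comb_slash_rep //.
by rewrite /slash comb_delta.
Qed.

End SlashRepresentation.

Lemma exists_slash_coeff (R : realType) (k : R) (ups : 'M[int]_2 -> R[i])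
  (V : set (R[i] -> R[i])) n (f : 'I_n -> R[i] -> R[i]) :
  (forall g gam, inSL2Z gam -> V g -> V (slash k ups g gam)) -> spans f V ->
  exists A : 'M[int]_2 -> 'M[R[i]]_n,
    forall g, inSL2Z g -> forall i, eqH (slash k ups (f i) g) (comb f (row i (A g))).
Proof.
move=> V_slash [fV f_span].
suff /choice [A hA] : forall g, exists M : 'M[R[i]]_n,
    inSL2Z g -> forall i, eqH (slash k ups (f i) g) (comb f (row i M)) by exists A.
move=> g; have [hg|nhg] := pselect (inSL2Z g); last by exists 0.
have /choice [c hc] : forall i, exists c : 'I_n -> R[i],
    eqH (slash k ups (f i) g) (fun z => \sum_j c j * f j z).
  by move=> i; apply/f_span/V_slash/fV.
exists (\matrix_(i, j) c i j) => _ i z hz.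
by rewrite hc // comb_row; apply: eq_bigr => j _; rewrite mxE.
Qed.

Theorem proposition2p14 (R : realType) (k : R) (ups : 'M[int]_2 -> R[i])
  (V : set (R[i] -> R[i])) (n : nat) (f : 'I_n -> R[i] -> R[i]) :
  is_multiplier_system k ups ->
  is_subspace V ->
  (forall g, V g -> holo_on_H g /\ moderate_growth g) ->
  (forall g gam, inSL2Z gam -> V g -> V (slash k ups g gam)) ->
  spans f V ->
  exists rho : 'M[int]_2 -> 'M[R[i]]_n, is_rep rho /\ in_H_space k rho ups f.
Proof.
move=> ups_mult _ V_holo_mod V_slash V_span.
have [K comb_kerP] := comb_kernel f.
have [P [P_idem P_compl P_ker]] := exists_proj_along K.
have [A slash_rowA] := exists_slash_coeff V_slash V_span.
exists (slash_rep A P); split.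
  exact: (slash_rep_is_rep ups_mult comb_kerP slash_rowA P_idem P_compl P_ker).
apply: (slash_rep_in_H comb_kerP slash_rowA P_compl) => i.
by apply: V_holo_mod; case: V_span.
Qed.
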